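(* Let $S=\{s_1<\dots<s_{k_1}\}$ and $T=\{t_1<\dots<t_{k_2}\}$ be nonempty subsets of $\{1,\dots,n-1\}$ with $\max S+\min T\le n$ and $\min S+\max T\le n$, let $A=T_n\langle S;T\rangle$, $d=\gcd\{s+t: s\in S,t\in T\}$ and $d'=\gcd(d,s_1)$. Suppose that for each $1\le i\le d$ the principal submatrix of the Boolean product $AA^T$ with rows and columns indexed by $\{v\in[n]: v\equiv i\pmod d\}$ is irreducible. Then the competition index of $A$ is at most $$2\big(\lceil n/d\rceil-1\big)\Big(\max\Big\{\Big\lceil\tfrac{t_{k_2}}{s_1}\Big\rceil,\Big\lceil\tfrac{s_{k_1}}{t_1}\Big\rceil\Big\}+1\Big)+2(s_1+t_1).$$
   Context: Boolean arithmetic on $\{0,1\}$: $1+1=1$. $T_n\langle S;T\rangle$ is the $n\times n$ $(0,1)$-matrix whose $(i,j)$-entry is $1$ iff $j-i\in S$ or $i-j\in T$. The competition index of $A$ is the smallest positive integer $q$ such that $A^{q+i}(A^T)^{q+i}=A^{q+r+i}(A^T)^{q+r+i}$ for some $r\ge1$ and all $i\ge0$. *)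

(* Boolean (0,1)-matrices of order n are functions
   'I_n -> 'I_n -> bool; index u : 'I_n stands for the paper's row/column u+1. *)
From mathcomp Require Import all_boot.
Set Implicit Arguments. Unset Strict Implicit. Unset Printing Implicit Defensive.

Definition bmat (n : nat) := 'I_n -> 'I_n -> bool.

Definition bmul n (A B : bmat n) : bmat n :=
  fun i j => [exists k, A i k && B k j].
Definition btr n (A : bmat n) : bmat n := fun i j => A j i.
Definition bid n : bmat n := fun i j => i == j.
Definition bpow n (A : bmat n) (k : nat) : bmat n := iter k (bmul A) (@bid n).

Definition Tmat n (S T : {set 'I_n}) : bmat n :=
  fun i j => [exists s in S, (j : nat) == i + s] || [exists t in T, (i : nat) == j + t].

Definition compmat n (A : bmat n) (k : nat) : bmat n :=
  bmul (bpow A k) (bpow (btr A) k).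

(* q satisfies the defining property of the competition index:
   exists r >= 1 with A^{q+i}(A^T)^{q+i} = A^{q+r+i}(A^T)^{q+r+i} for all i >= 0. *)
Definition comp_prop n (A : bmat n) (q : nat) : Prop :=
  exists2 r, 0 < r & forall i u v, compmat A (q + i) u v = compmat A (q + r + i) u v.

Definition principal_irreducible n (M : bmat n) (W : {set 'I_n}) : Prop :=
  forall u v, u \in W -> v \in W ->
    connect (fun x y => [&& x \in W, y \in W & M x y]) u v.

Definition ceil_div (a b : nat) : nat := (a + b.-1) %/ b.

From mathcomp Require Import all_boot all_order zify.
Import Order.TTheory.
Set Implicit Arguments. Unset Strict Implicit. Unset Printing Implicit Defensive.

(* Let p = s1 + t1.  From every vertex x the digraph of A = T_n<S;T> has a
   "ladder" arc, up by s1 or down by t1, and both lower x by t1 modulo p.  So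
   two walkers u, v taking ladder steps together keep the residue of u - v
   modulo p, and once u - v is a multiple of p they meet after (u - v)/p
   steps.  Within R + 1 steps, R = max(ceil(tk/s1), ceil(sk/t1)), one walker
   can use an arc by s in S (resp. t in T) instead, which adds s + t1 (resp.
   t + s1) to that residue.  These shifts generate the multiples of d in Z/p,
   and a shortest chain of shifts visits distinct multiples of d below n, so it
   has at most ceil(n/d) - 1 steps.  Since every walk of length k from x ends
   at a point congruent to x - k t1 modulo d, A^k (A^T)^k is exactly the
   congruence modulo d once k >= (ceil(n/d) - 1)(R + 2), and from then on it
   is constant. *)

Lemma bpow0 n (A : bmat n) x y : bpow A 0 x y = (x == y). Proof. by []. Qed.

Lemma bpowS n (A : bmat n) k x y :
  bpow A k.+1 x y = [exists z, A x z && bpow A k z y].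
Proof. by []. Qed.

Section BoolMatrixPowers.
Variables (n : nat) (A : bmat n).

Lemma bpow1 x y : bpow A 1 x y = A x y.
Proof.
apply/existsP/idP => [[z /andP[Axz /eqP <-]] // | Axy].
by exists y; rewrite Axy; apply: eqxx.
Qed.

Lemma bpowD j k x y :
  bpow A (j + k) x y = [exists z, bpow A j x z && bpow A k z y].
Proof.
elim: j x => [|j IH] x.
  apply/idP/existsP => [xy | [z /andP[/eqP-> //]]].
  by exists x; rewrite bpow0 eqxx.
rewrite addSn bpowS; apply/existsP/existsP => [[w /andP[Axw]] | [z]].
  rewrite IH => /existsP[z /andP[wz zy]]; exists z; rewrite zy andbT.
  by apply/existsP; exists w; rewrite Axw.
rewrite bpowS => /andP[/existsP[w /andP[Axw wz]] zy]; exists w.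
by rewrite Axw IH; apply/existsP; exists z; rewrite wz.
Qed.

Lemma bpowSr k x y : bpow A k.+1 x y = [exists z, bpow A k x z && A z y].
Proof. by rewrite -addn1 bpowD; apply: eq_existsb => z; rewrite bpow1. Qed.

Lemma bpow_tr k x y : bpow (btr A) k x y = bpow A k y x.
Proof.
elim: k x => [|k IH] x; first by rewrite !bpow0 eq_sym.
by rewrite bpowS bpowSr; apply: eq_existsb => z; rewrite IH andbC.
Qed.

Lemma compmatE k u v :
  compmat A k u v = [exists w, bpow A k u w && bpow A k v w].
Proof. by apply: eq_existsb => w; rewrite bpow_tr. Qed.

Lemma compmatC k u v : compmat A k u v = compmat A k v u.
Proof. by rewrite !compmatE; apply: eq_existsb => w; rewrite andbC. Qed.

Lemma compmatD j k u v u' v' : bpow A j u u' -> bpow A j v v' ->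
  compmat A k u' v' -> compmat A (j + k) u v.
Proof.
rewrite !compmatE => uu' vv' /existsP[w /andP[u'w v'w]].
apply/existsP; exists w; rewrite !bpowD.
by apply/andP; split; apply/existsP; [exists u' | exists v']; apply/andP.
Qed.

Hypothesis A_total : forall x, exists y, A x y.

Lemma compmat_mono k k' u v : k <= k' -> compmat A k u v -> compmat A k' u v.
Proof.
move/subnK <-; elim: (k' - k) => // m IH /IH.
rewrite !compmatE => /existsP[w /andP[uw vw]]; have [y Awy] := A_total w.
apply/existsP; exists y; rewrite addSn !bpowSr.
by apply/andP; split; apply/existsP; exists w; rewrite Awy andbT.
Qed.

End BoolMatrixPowers.

Definition shift_rel p (gens : seq nat) : rel 'I_p :=
  fun r r' => has (fun g => r' == (r + g) %% p :> nat) gens.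
Arguments shift_rel : clear implicits.

Section ShiftWalks.
Variables (n : nat) (A : bmat n) (p b K c : nat) (gens : seq nat).

Hypothesis ladder :
  forall k x, exists y, bpow A k x y /\ y + k * b = x %[mod p].
Hypothesis jump : forall g, g \in gens ->
  (forall x, exists k x',
     [/\ k <= K, bpow A k x x' & x' + k * b = x + g %[mod p]]) \/
  (forall x, exists k x',
     [/\ k <= K, bpow A k x x' & x' + k * b + g = x %[mod p]]).
Hypothesis base : forall u v : 'I_n, u = v %[mod p] -> compmat A c u v.

Let A_total x : exists y, A x y.
Proof. by have [y [xy _]] := ladder 1 x; exists y; rewrite -bpow1. Qed.

(* Each edge r -> r + g of the path costs at most K steps: one walker jumps
   by g while the other follows the ladder, which keeps v + r = u (mod p). *)
Lemma compmat_shift_path (r : 'I_p) q :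
  path (shift_rel p gens) r q -> last r q = 0 :> nat ->
  forall u v : 'I_n, v + r = u %[mod p] -> compmat A (size q * K + c) u v.
Proof.
elim: q r => [|r' q IH] r /=.
  by move=> _ -> u v; rewrite addn0 => vu; apply: base.
move=> /andP[/hasP[g gens_g /eqP r'E] r'q] lastq u v vru.
suff [k [u' [v' [kK uu' vv' v'r'u']]]] : exists k u' v',
    [/\ k <= K, bpow A k u u', bpow A k v v' & v' + r' = u' %[mod p]].
  have := compmatD uu' vv' (IH _ r'q lastq _ _ v'r'u').
  by apply: compmat_mono => //; rewrite /= mulSn; lia.
case: (jump gens_g) => [up | down].
- have [k [u' [kK uu' u'E]]] := up u; have [v' [vv' v'E]] := ladder k v.
  exists k, u', v'; split => //; apply/eqP; rewrite -(eqn_modDr (k * b)) u'E.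
  rewrite addnAC -modnDml v'E modnDml r'E modnDmr addnA.
  by rewrite -modnDml vru modnDml.
- have [k [v' [kK vv' v'E]]] := down v; have [u' [uu' u'E]] := ladder k u.
  exists k, u', v'; split => //; apply/eqP; rewrite -(eqn_modDr (k * b)) u'E.
  rewrite addnAC r'E modnDmr addnA addnAC.
  by rewrite -modnDml v'E modnDml vru.
Qed.

End ShiftWalks.

Lemma dvdn_modn d p m : d %| p -> (d %| m %% p) = (d %| m).
Proof. by move=> d_p; rewrite {2}(divn_eq m p) dvdn_addr // dvdn_mull. Qed.

Lemma leq_ceil_div a b : 0 < b -> a <= ceil_div a b * b.
Proof.
move=> b_gt0; have := ltn_ceil (a + b.-1) b_gt0.
by rewrite /ceil_div mulSn; move: (_ %/ b * b) => q; lia.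
Qed.

Lemma ceil_div_pred m d : 0 < m -> 0 < d -> ceil_div m d = (m.-1 %/ d).+1.
Proof.
move=> m_gt0 d_gt0; rewrite /ceil_div -[in m + _](prednK m_gt0) addSnnS.
by rewrite prednK // divnDr // divnn d_gt0 addn1.
Qed.

Lemma size_uniq_multiples m d (s : seq nat) : 0 < d -> uniq s ->
  {in s, forall x, x < m /\ d %| x} -> size s <= (m.-1 %/ d).+1.
Proof.
move=> d_gt0 uniq_s s_dvd.
rewrite -(size_map (divn^~ d)) -(size_iota 0 (m.-1 %/ d).+1).
apply: uniq_leq_size => [|_ /mapP[x /s_dvd[x_lt_m _] ->]].
  rewrite map_inj_in_uniq // => x y /s_dvd[_ dx] /s_dvd[_ dy] xy.
  by rewrite -(divnK dx) -(divnK dy) xy.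
by rewrite mem_iota /= ltnS leq_div2r // -ltnS (ltn_predK x_lt_m).
Qed.

Lemma shift_path_dvdn d p gens (r : 'I_p) q : d %| p -> all (dvdn d) gens ->
  d %| r -> path (shift_rel p gens) r q -> all (fun x : 'I_p => d %| x) q.
Proof.
move=> d_p d_gens; elim: q r => //= r' q IH r d_r.
case/andP=> /hasP[g gens_g /eqP r'E] r'q.
have d_r' : d %| r' by rewrite r'E dvdn_modn // dvdn_add // (allP d_gens).
by rewrite d_r' (IH r').
Qed.

Section ShiftConnectivity.
Variables (p : nat) (gens : seq nat).
Hypothesis p_gt0 : 0 < p.
Local Notation ordp x := (Ordinal (ltn_pmod x p_gt0)).
Local Notation gcd_gens := (\big[gcdn/0]_(g <- p :: gens) g).

Definition shift_connected x :=
  forall r : 'I_p, connect (shift_rel p gens) r (ordp (r + x)).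

Lemma shift_connected_congr x y :
  x = y %[mod p] -> shift_connected x -> shift_connected y.
Proof.
move=> xy cx r; have -> : ordp (r + y) = ordp (r + x).
  by apply: val_inj; rewrite /= -modnDmr -xy modnDmr.
exact: cx.
Qed.

Lemma shift_connected0 : shift_connected 0.
Proof.
move=> r; have -> : ordp (r + 0) = r.
  by apply: val_inj; rewrite /= addn0 modn_small.
exact: connect0.
Qed.

Lemma shift_connected_gen g : g \in gens -> shift_connected g.
Proof. by move=> gens_g r; apply: connect1; apply/hasP; exists g. Qed.

Lemma shift_connectedD x y :
  shift_connected x -> shift_connected y -> shift_connected (x + y).
Proof.
move=> cx cy r; apply: connect_trans (cx r) _.
have -> : ordp (r + (x + y)) = ordp (ordp (r + x) + y).
  by apply: val_inj; rewrite /= modnDml addnA.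
exact: cy.
Qed.

Lemma shift_connectedM x k : shift_connected x -> shift_connected (x * k).
Proof.
move=> cx; elim: k => [|k IH]; first by rewrite muln0; apply: shift_connected0.
by rewrite mulnS; apply: shift_connectedD.
Qed.

Lemma shift_connected_gcd a b :
  shift_connected a -> shift_connected b -> shift_connected (gcdn a b).
Proof.
move=> ca cb; have [-> | a_gt0] := posnP a; first by rewrite gcd0n.
have [k _ /dvdnP[q Bezout_ab]] := Bezoutl b a_gt0.
apply: (@shift_connected_congr (a * q + b * (k * p.-1))).
  have -> : a * q + b * (k * p.-1) = k * b * p + gcdn a b.
    by rewrite -[in RHS](prednK p_gt0) mulnS; nia.
  by rewrite modnMDl.
by apply: shift_connectedD; apply: shift_connectedM.
Qed.

Lemma shift_connected_gcd_gens : shift_connected gcd_gens.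
Proof.
rewrite big_seq; apply: big_ind => [|x y|g]; first exact: shift_connected0.
  exact: shift_connected_gcd.
rewrite inE => /predU1P[-> | ]; last exact: shift_connected_gen.
apply: (@shift_connected_congr 0); last exact: shift_connected0.
by rewrite modnn mod0n.
Qed.

Lemma gcd_gens_dvdn g : g \in p :: gens -> gcd_gens %| g.
Proof. by move=> gens_g; rewrite (big_rem g) //= dvdn_gcdl. Qed.

Lemma connect_shift_rel0 (r : 'I_p) :
  gcd_gens %| r -> connect (shift_rel p gens) r (Ordinal p_gt0).
Proof.
move=> dvd_r; have dvd_p := gcd_gens_dvdn (mem_head p gens).
have := shift_connectedM ((p - r) %/ gcd_gens) shift_connected_gcd_gens r.
rewrite mulnC divnK ?dvdn_sub // subnKC ?(ltnW (ltn_ord r)) //.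
by have -> : ordp p = Ordinal p_gt0 by apply: val_inj; rewrite /= modnn.
Qed.

Lemma short_shift_path m (r : 'I_p) : p <= m -> gcd_gens %| r ->
  exists2 q, path (shift_rel p gens) r q
           & (last r q == 0 :> nat) && (size q <= m.-1 %/ gcd_gens).
Proof.
move=> p_le_m dvd_r; have /connectP[q0 q0_path] := connect_shift_rel0 dvd_r.
case: (shortenP q0_path) => q q_path q_uniq _ q_last.
exists q => //; rewrite -q_last eqxx /= -ltnS.
have dvd_p := gcd_gens_dvdn (mem_head p gens).
have dvd_gens : all (dvdn gcd_gens) gens.
  by apply/allP => g gens_g; rewrite gcd_gens_dvdn // inE gens_g orbT.
have dvd_q := shift_path_dvdn dvd_p dvd_gens dvd_r q_path.
rewrite -[(size q).+1]/(size (r :: q)) -(size_map val).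
apply: size_uniq_multiples (dvdn_gt0 p_gt0 dvd_p) _ _.
  by rewrite map_inj_uniq //; exact: val_inj.
move=> _ /mapP[x x_rq ->]; split; first exact: leq_trans (ltn_ord x) p_le_m.
by move: x_rq; rewrite inE => /predU1P[-> // | /(allP dvd_q)].
Qed.

End ShiftConnectivity.

Section Toeplitz.
Variables (n : nat) (S T : {set 'I_n}) (s1 t1 : 'I_n) (R d : nat).
Hypotheses (S_s1 : s1 \in S) (T_t1 : t1 \in T).
Hypotheses (s1_gt0 : 0 < s1) (t1_gt0 : 0 < t1).
Hypothesis S_t1_le : forall s : 'I_n, s \in S -> s + t1 <= n.
Hypothesis T_s1_le : forall t : 'I_n, t \in T -> s1 + t <= n.

Local Notation A := (Tmat S T).
Local Notation p := (s1 + t1 : nat).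

Let p_le_n : p <= n. Proof. exact: T_s1_le. Qed.
Let p_gt0 : 0 < p. Proof. by rewrite addn_gt0 s1_gt0. Qed.

Lemma Tmat_up (x y s : 'I_n) : s \in S -> y = x + s :> nat -> A x y.
Proof.
by move=> Ss yE; apply/orP; left; apply/existsP; exists s; rewrite Ss yE eqxx.
Qed.

Lemma Tmat_down (x y t : 'I_n) : t \in T -> x = y + t :> nat -> A x y.
Proof.
by move=> Tt xE; apply/orP; right; apply/existsP; exists t; rewrite Tt xE eqxx.
Qed.

Lemma TmatP x y : A x y ->
  (exists2 s : 'I_n, s \in S & y = x + s :> nat) \/
  (exists2 t : 'I_n, t \in T & x = y + t :> nat).
Proof. by case/orP => /existsP[z /andP[Xz /eqP zE]]; [left | right]; exists z. Qed.

Lemma Tmat_ladder_step x : exists y, A x y /\ y + t1 = x %[mod p].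
Proof.
have [x_up | x_down] := ltnP (x + s1) n.
  exists (Ordinal x_up); split; first exact: (Tmat_up (s := s1)).
  by rewrite /= -addnA modnDr.
have := p_le_n; have y_lt : x - t1 < n by have := ltn_ord x; lia.
exists (Ordinal y_lt); split; last by rewrite /= subnK //; lia.
by apply: (Tmat_down (t := t1)) => //=; lia.
Qed.

Lemma Tmat_total x : exists y, A x y.
Proof. by have [y [xy _]] := Tmat_ladder_step x; exists y. Qed.

Lemma Tmat_ladder k x : exists y, bpow A k x y /\ y + k * t1 = x %[mod p].
Proof.
elim: k x => [|k IH] x; first by exists x; rewrite bpow0 mul0n addn0.
have [z [xz zE]] := Tmat_ladder_step x; have [y [zy yE]] := IH z.
exists y; split; first by apply/existsP; exists z; rewrite xz.
by rewrite mulSn addnCA addnC -modnDml yE modnDml zE.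
Qed.

Lemma Tmat_descend (s : 'I_n) : s \in S ->
  forall m (x : 'I_n), x + s < n + m * t1 ->
  exists j y, [/\ j <= m, bpow A j x y, x = y + j * t1 :> nat & y + s < n].
Proof.
move=> Ss m; elim: m => [|m IH] x x_lt.
  by rewrite mul0n addn0 in x_lt; exists 0, x; rewrite bpow0 mul0n addn0.
have [x_low | x_high] := ltnP (x + s) n.
  by exists 0, x; rewrite bpow0 mul0n addn0.
have := S_t1_le Ss; have := ltn_ord x => x_lt_n s_t1.
have z_lt : x - t1 < n by lia.
have [|j [y [jm zy zE ys]]] := IH (Ordinal z_lt).
  by move: x_lt; rewrite /= mulSn; lia.
exists j.+1, y; split => //; last by rewrite mulSn; move: zE => /=; lia.
rewrite bpowS; apply/existsP; exists (Ordinal z_lt); rewrite zy andbT.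
by apply: (Tmat_down (t := t1)) => //=; lia.
Qed.

Lemma Tmat_ascend (t : 'I_n) : t \in T ->
  forall m (x : 'I_n), t <= x + m * s1 ->
  exists j y, [/\ j <= m, bpow A j x y, y = x + j * s1 :> nat & t <= y].
Proof.
move=> Tt m; elim: m => [|m IH] x t_le.
  by rewrite mul0n addn0 in t_le; exists 0, x; rewrite bpow0 mul0n addn0.
have [x_high | x_low] := leqP t x; first by exists 0, x; rewrite bpow0 mul0n addn0.
have z_lt : x + s1 < n by have := T_s1_le Tt; lia.
have [|j [y [jm zy yE ty]]] := IH (Ordinal z_lt).
  by move: t_le; rewrite /= mulSn; lia.
exists j.+1, y; split => //; last by rewrite mulSn yE /=; lia.
rewrite bpowS; apply/existsP; exists (Ordinal z_lt); rewrite zy andbT.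
exact: (Tmat_up (s := s1)).
Qed.

Hypothesis S_ceil : forall s : 'I_n, s \in S -> ceil_div s t1 <= R.
Hypothesis T_ceil : forall t : 'I_n, t \in T -> ceil_div t s1 <= R.

Lemma Tmat_jump_up (s : 'I_n) : s \in S -> forall x, exists k x',
  [/\ k <= R.+1, bpow A k x x' & x' + k * t1 = x + (s + t1)].
Proof.
move=> Ss x; have := leq_ceil_div s t1_gt0; have := ltn_ord x => x_lt s_le.
have [|j [y [jm xy xE ys]]] := Tmat_descend Ss (m := ceil_div s t1) (x := x).
  by lia.
exists j.+1, (Ordinal ys); split; first exact: leq_trans jm (S_ceil Ss).
  rewrite bpowSr; apply/existsP; exists y; rewrite xy.
  exact: (Tmat_up (s := s)).
by rewrite /= mulSn xE; lia.
Qed.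

Lemma Tmat_jump_down (t : 'I_n) : t \in T -> forall x, exists k x',
  [/\ k <= R.+1, bpow A k x x' & x' + k * t1 + (t + s1) = x + k * p].
Proof.
move=> Tt x; have := leq_ceil_div t s1_gt0 => t_le.
have [|j [y [jm xy yE ty]]] := Tmat_ascend Tt (m := ceil_div t s1) (x := x).
  by lia.
have y_lt : y - t < n by have := ltn_ord y; lia.
exists j.+1, (Ordinal y_lt); split; first exact: leq_trans jm (T_ceil Tt).
  rewrite bpowSr; apply/existsP; exists y; rewrite xy.
  by apply: (Tmat_down (t := t)) => //=; lia.
by rewrite /= !mulSn yE; lia.
Qed.

Lemma compmat_Tmat_multiple g (u v : 'I_n) :
  u = v + g * p :> nat -> compmat A g u v.
Proof.
elim: g u v => [|g IH] u v uE.
  rewrite compmatE; apply/existsP; exists u; rewrite !bpow0 eqxx /=.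
  by apply/eqP/val_inj => /=; rewrite uE mul0n addn0.
have u_lt : u - t1 < n by have := ltn_ord u; lia.
have v_lt : v + s1 < n by have := ltn_ord u; move: uE; rewrite mulSn; lia.
apply: (@compmatD _ _ 1 _ _ _ (Ordinal u_lt) (Ordinal v_lt)).
- rewrite bpow1; apply: (Tmat_down (t := t1)) => //=.
  by move: uE; rewrite mulSn; lia.
- by rewrite bpow1; apply: (Tmat_up (s := s1)).
- by apply: IH => /=; move: uE; rewrite mulSn; lia.
Qed.

Hypothesis dvd_d : forall s t : 'I_n, s \in S -> t \in T -> d %| s + t.
Hypothesis gcd_d :
  forall m, (forall s t : 'I_n, s \in S -> t \in T -> m %| s + t) -> m %| d.

Let d_gt0 : 0 < d. Proof. exact: dvdn_gt0 (dvd_d S_s1 T_t1). Qed.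

Lemma Tmat_mod_d x y : A x y -> y + t1 = x %[mod d].
Proof.
case/TmatP => [[s Ss ->] | [t Tt ->]].
  by rewrite -addnA -modnDmr (eqP (dvd_d Ss T_t1)) addn0.
apply/eqP; rewrite eqn_modDl -(eqn_modDl s1).
by rewrite (eqP (dvd_d S_s1 T_t1)) (eqP (dvd_d S_s1 Tt)).
Qed.

Lemma bpow_Tmat_mod_d k x y : bpow A k x y -> y + k * t1 = x %[mod d].
Proof.
elim: k x => [|k IH] x; first by rewrite bpow0 mul0n addn0 => /eqP->.
rewrite bpowS => /existsP[z /andP[xz /IH zyE]].
by rewrite mulSn addnCA addnC -modnDml zyE modnDml (Tmat_mod_d xz).
Qed.

Lemma compmat_Tmat_mod_d k u v : compmat A k u v -> u = v %[mod d].
Proof.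
rewrite compmatE => /existsP[w /andP[]].
by move=> /bpow_Tmat_mod_d <- /bpow_Tmat_mod_d <-.
Qed.

Lemma compmat_Tmat_modp (u v : 'I_n) :
  u = v %[mod p] -> compmat A (n.-1 %/ d) u v.
Proof.
wlog vu : u v / v <= u.
  move=> wlog_uv uv; have [vu | /ltnW uv'] := leqP v u; first exact: wlog_uv.
  by rewrite compmatC; apply: wlog_uv uv' (esym uv).
move/eqP; rewrite eqn_mod_dvd // => /divnK uvE.
have uvE' : u = v + (u - v) %/ p * p :> nat by rewrite uvE subnKC.
have := compmat_Tmat_multiple uvE'; apply: (compmat_mono Tmat_total).
apply: leq_trans (leq_div2l _ d_gt0 (dvdn_leq p_gt0 (dvd_d S_s1 T_t1))).
by apply: leq_div2r; have := ltn_ord u; lia.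
Qed.

Local Notation gens :=
  ([seq (s : nat) + t1 | s : 'I_n in S] ++ [seq (t : nat) + s1 | t : 'I_n in T]).

Lemma Tmat_gens_jump g : g \in gens ->
  (forall x, exists k x',
     [/\ k <= R.+1, bpow A k x x' & x' + k * t1 = x + g %[mod p]]) \/
  (forall x, exists k x',
     [/\ k <= R.+1, bpow A k x x' & x' + k * t1 + g = x %[mod p]]).
Proof.
rewrite mem_cat => /orP[/imageP[s Ss ->] | /imageP[t Tt ->]]; [left | right] => x.
  have [k [x' [kR xx' x'E]]] := Tmat_jump_up Ss x.
  by exists k, x'; rewrite x'E.
have [k [x' [kR xx' x'E]]] := Tmat_jump_down Tt x.
by exists k, x'; rewrite x'E addnC modnMDl.
Qed.

Lemma gcd_Tmat_gens : \big[gcdn/0]_(g <- p :: gens) g = d.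
Proof.
apply/eqP; rewrite eqn_dvd; apply/andP; split.
  apply: gcd_d => s t Ss Tt.
  rewrite -(dvdn_addr _ (gcd_gens_dvdn (mem_head _ _))).
  have -> : p + (s + t) = (s + t1) + (t + s1) by lia.
  by apply: dvdn_add; apply: gcd_gens_dvdn; rewrite inE mem_cat image_f ?orbT.
rewrite big_seq; elim/big_ind: _ => [|x y dx dy|g]; first exact: dvdn0.
  by rewrite dvdn_gcd dx.
rewrite inE mem_cat => /or3P[/eqP-> | /imageP[s Ss ->] | /imageP[t Tt ->]].
- exact: dvd_d.
- exact: dvd_d.
- by rewrite addnC dvd_d.
Qed.

Lemma compmat_Tmat_eventually k u v : n.-1 %/ d * R.+2 <= k ->
  compmat A k u v = (u == v %[mod d]).
Proof.
move=> k_ge; apply/idP/eqP => [/compmat_Tmat_mod_d // | uv].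
(* the residue of u - v modulo p, written without truncated subtraction *)
pose r := Ordinal (ltn_pmod (u + v * p.-1) p_gt0).
have vru : v + r = u %[mod p].
  by rewrite /= modnDmr addnCA -mulnS prednK // addnC modnMDl.
have d_r : d %| r.
  rewrite dvdn_modn ?dvd_d // /dvdn -modnDml uv modnDml -mulnS prednK //.
  by rewrite -/(dvdn _ _) dvdn_mull ?dvd_d.
rewrite -gcd_Tmat_gens in d_r k_ge.
have [q q_path /andP[/eqP q_last q_size]] := short_shift_path p_gt0 p_le_n d_r.
have := compmat_shift_path Tmat_ladder Tmat_gens_jump compmat_Tmat_modp
  q_path q_last vru.
rewrite gcd_Tmat_gens in q_size k_ge; apply: (compmat_mono Tmat_total).
by apply: leq_trans k_ge; rewrite [X in _ <= X]mulnS addnC leq_add2l leq_mul.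
Qed.

End Toeplitz.

Lemma bigminn_mem n (X : {set 'I_n}) : X != set0 ->
  exists2 a : 'I_n, a \in X & \big[minn/n]_(x in X) (x : nat) = a.
Proof.
case/set0Pn => x0 X_x0; rewrite (bigmin_eq_arg n x0) // => [|x _].
  by case: arg_minP => // a X_a _; exists a.
exact: ltnW.
Qed.

Lemma bigminn_gt0 n (X : {set 'I_n}) : X != set0 ->
  (forall x : 'I_n, x \in X -> 0 < x) -> 0 < \big[minn/n]_(x in X) (x : nat).
Proof. by move=> /bigminn_mem[a X_a ->]; apply. Qed.

Section ToeplitzExtremal.
Variables (n : nat) (S T : {set 'I_n}).
Hypotheses (S_neq0 : S != set0) (T_neq0 : T != set0).
Hypothesis S_gt0 : forall s : 'I_n, s \in S -> 0 < s.
Hypothesis T_gt0 : forall t : 'I_n, t \in T -> 0 < t.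

Local Notation s1 := (\big[minn/n]_(s in S) (s : nat)).
Local Notation sk := (\max_(s in S) (s : nat)).
Local Notation t1 := (\big[minn/n]_(t in T) (t : nat)).
Local Notation tk := (\max_(t in T) (t : nat)).
Local Notation d := (\big[gcdn/0]_(s in S) \big[gcdn/0]_(t in T) ((s : nat) + t)).
Local Notation R := (maxn (ceil_div tk s1) (ceil_div sk t1)).

Hypotheses (sk_t1 : sk + t1 <= n) (s1_tk : s1 + tk <= n).

Lemma compmat_Toeplitz_eventually k u v : (ceil_div n d - 1) * R.+2 <= k ->
  compmat (Tmat S T) k u v = (u == v %[mod d]).
Proof.
have [a Sa s1E] := bigminn_mem S_neq0; have [b Tb t1E] := bigminn_mem T_neq0.
have S_le s : s \in S -> s <= sk by move=> Ss; apply: (leq_bigmax_cond (F := val)).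
have T_le t : t \in T -> t <= tk by move=> Tt; apply: (leq_bigmax_cond (F := val)).
have dvd_d s t : s \in S -> t \in T -> d %| s + t.
  by move=> Ss Tt; apply: (biggcdn_inf s) => //; apply: (biggcdn_inf t).
have d_gt0 : 0 < d by apply: dvdn_gt0 (dvd_d _ _ Sa Tb); rewrite addn_gt0 S_gt0.
rewrite ceil_div_pred ?subn1 //; last exact: leq_ltn_trans (leq0n _) (ltn_ord a).
apply: (compmat_Tmat_eventually Sa Tb (S_gt0 Sa) (T_gt0 Tb))
  => // [s Ss | t Tt | s Ss | t Tt | m m_dvd].
- by rewrite -t1E; apply: leq_trans sk_t1; rewrite leq_add2r S_le.
- by rewrite -s1E; apply: leq_trans s1_tk; rewrite leq_add2l T_le.
- rewrite -t1E; apply: leq_trans (leq_maxr _ _).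
  by apply: leq_div2r; rewrite leq_add2r S_le.
- rewrite -s1E; apply: leq_trans (leq_maxl _ _).
  by apply: leq_div2r; rewrite leq_add2r T_le.
- by apply/dvdn_biggcdP => s Ss; apply/dvdn_biggcdP => t Tt; apply: m_dvd.
Qed.

End ToeplitzExtremal.

Theorem theorem3p5 (n : nat) (S T : {set 'I_n})
  (hS0 : S != set0) (hT0 : T != set0)
  (hSpos : forall s : 'I_n, s \in S -> 0 < s)
  (hTpos : forall t : 'I_n, t \in T -> 0 < t) :
  let s1 := \big[minn/n]_(s in S) (s : nat) in
  let sk := \max_(s in S) (s : nat) in
  let t1 := \big[minn/n]_(t in T) (t : nat) in
  let tk := \max_(t in T) (t : nat) in
  let A := Tmat S T in
  let d := \big[gcdn/0]_(s in S) \big[gcdn/0]_(t in T) ((s : nat) + t) in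
  sk + t1 <= n -> s1 + tk <= n ->
  (forall i, 1 <= i <= d ->
     principal_irreducible (bmul A (btr A))
       [set v : 'I_n | v.+1 == i %[mod d]]) ->
  exists q, [/\ 0 < q,
    q <= 2 * (ceil_div n d - 1) * (maxn (ceil_div tk s1) (ceil_div sk t1) + 1)
         + 2 * (s1 + t1)
    & comp_prop A q].
Proof.
move=> s1 sk t1 tk A d sk_t1 s1_tk _.
have eventually := compmat_Toeplitz_eventually hS0 hT0 hSpos hTpos sk_t1 s1_tk.
set R := maxn _ _ in eventually *; set X := ceil_div n d - 1 in eventually *.
set B := 2 * X * (R + 1) + 2 * (s1 + t1).
have B_ge : X * R.+2 <= B.
  rewrite /B addn1 mulnAC [X * _]mulnC; apply: leq_trans (leq_addr _ _).
  by apply: leq_mul => //; lia.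
exists B; split => //; first by rewrite addn_gt0 orbC muln_gt0 addn_gt0 bigminn_gt0.
exists 1 => // i u v; rewrite !eventually ?(leq_trans B_ge) //.
  by rewrite -addnA leq_addr.
exact: leq_addr.
Qed.
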